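(* Let $R,T,N,\sigma$ be real numbers with $T\ge3$, $R,N\ge1$, $\sigma\ge\frac12$, let $j$ be a positive integer, and let $(a_n)$ be any sequence of complex numbers. Then for every $\varepsilon>0$, $$\sum_{q\le R}\ \sum_{\substack{\chi\bmod qj\\ \chi\ne\chi_0}}\Bigg(\int_{-T}^{T}\Bigg|\sum_{n\le N}\frac{a_n\chi(n)}{n^{\sigma+it}}\Bigg|\,dt\Bigg)^2\ll_\varepsilon(jRNT)^\varepsilon\,(RNT+jR^2T^2)\sum_{n\le N}\frac{|a_n|^2}{n^{2\sigma}},$$ where the inner sum is over all non-principal Dirichlet characters $\chi$ modulo $qj$, and the implied constant depends only on $\varepsilon$. *)

From Stdlib Require Import Reals Lra Lia List.
From Coquelicot Require Import Coquelicot.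
Open Scope R_scope.

(* floor of a real number, as a nat (used for "n <= N" with N >= 1) *)
Definition floor_nat (x : R) : nat := Z.to_nat (Int_part x).

(* sum_{n=1}^{K} f n *)
Fixpoint rsum (K : nat) (f : nat -> R) : R :=
  match K with O => 0 | S k => rsum k f + f (S k) end.
Fixpoint csum (K : nat) (f : nat -> C) : C :=
  match K with O => RtoC 0 | S k => Cplus (csum k f) (f (S k)) end.

(* n^{-(sigma + i t)} = n^{-sigma} (cos(t log n) - i sin(t log n)), n >= 1 *)
Definition npow_neg (n : nat) (sigma t : R) : C :=
  (Rpower (INR n) (- sigma) * cos (t * ln (INR n)),
   - (Rpower (INR n) (- sigma) * sin (t * ln (INR n))))%R.

Definition dirichlet_character (m : nat) (chi : nat -> C) : Prop :=
  (forall n, chi (n + m)%nat = chi n) /\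
  (forall a b, chi (a * b)%nat = Cmult (chi a) (chi b)) /\
  chi 1%nat = RtoC 1 /\
  (forall n, chi n = RtoC 0 <-> Nat.gcd n m <> 1%nat).

Definition principal_character (m : nat) (chi : nat -> C) : Prop :=
  forall n, Nat.gcd n m = 1%nat -> chi n = RtoC 1.

Definition nonprincipal_character (m : nat) (chi : nat -> C) : Prop :=
  dirichlet_character m chi /\ ~ principal_character m chi.

Definition char_integral (T N sigma : R) (a chi : nat -> C) : R :=
  RInt (fun t => Cmod (csum (floor_nat N)
          (fun n => Cmult (Cmult (a n) (chi n)) (npow_neg n sigma t)))) (- T) T.

From Stdlib Require Import Reals ZArith List Lra Lia Permutation Classical FunctionalExtensionality.
From Coquelicot Require Import Coquelicot.
Open Scope R_scope.

(* For a single modulus [m = q j] the estimate is elementary.  By Cauchy-Schwarz,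
   (int |F_chi|)^2 <= 2T int |F_chi|^2.  Splitting the Dirichlet polynomial by residue classes
   writes F_chi(t) = sum_r chi(r) G_r(t); the vectors (chi(r))_r of distinct characters are
   orthogonal with squared norm at most m, so Bessel's inequality gives
   sum_chi |F_chi(t)|^2 <= m sum_r |G_r(t)|^2.  Within a class the frequencies log n are spaced
   by at least (m/N)|k - l|, and int_{-T}^{T} e^{i t d} dt is at most 2/|d|, whence
   int |G_r|^2 <= (2T + 4 N H_N / m) sum_{n = r mod m} |a_n|^2 n^{-2 sigma} with H_N <= 1 + log N.
   Summing over q <= R gives 8 (1 + log N) (RNT + j R^2 T^2) sum_n |a_n|^2 n^{-2 sigma}, and
   1 + log N <= (1 + 1/eps) (jRNT)^eps. *)

(** * Finite sums *)

Fixpoint sumR (n : nat) (f : nat -> R) : R :=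
  match n with O => 0 | S k => sumR k f + f k end.

Lemma sumR_ext n f g : (forall i, (i < n)%nat -> f i = g i) -> sumR n f = sumR n g.
Proof. induction n; intros H; simpl; [easy|]. rewrite IHn, H; auto. Qed.

Lemma sumR_plus n f g : sumR n (fun i => f i + g i) = sumR n f + sumR n g.
Proof. induction n; simpl; [lra|]. rewrite IHn; lra. Qed.

Lemma sumR_scal n c f : sumR n (fun i => c * f i) = c * sumR n f.
Proof. induction n; simpl; [lra|]. rewrite IHn; lra. Qed.

Lemma sumR_const n c : sumR n (fun _ => c) = INR n * c.
Proof. induction n; simpl sumR; [simpl; lra|]. rewrite IHn, S_INR; lra. Qed.

Lemma sumR_zero n : sumR n (fun _ => 0) = 0.
Proof. induction n; simpl; [easy|]. rewrite IHn; lra. Qed.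

Lemma sumR_le n f g : (forall i, (i < n)%nat -> f i <= g i) -> sumR n f <= sumR n g.
Proof.
  induction n; intros H; simpl; [lra|].
  assert (sumR n f <= sumR n g) by auto. assert (f n <= g n) by auto. lra.
Qed.

Lemma sumR_nonneg n f : (forall i, (i < n)%nat -> 0 <= f i) -> 0 <= sumR n f.
Proof. intros H. rewrite <- (sumR_zero n). now apply sumR_le. Qed.

Lemma sumR_add a b f : sumR (a + b) f = sumR a f + sumR b (fun i => f (a + i)%nat).
Proof. induction b; simpl; [rewrite Nat.add_0_r; lra|]. rewrite Nat.add_succ_r; simpl; lra. Qed.

Lemma sumR_le_widen n M f : (n <= M)%nat -> (forall i, 0 <= f i) -> sumR n f <= sumR M f.
Proof.
  intros H Hf. replace M with (n + (M - n))%nat by lia. rewrite sumR_add.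
  assert (0 <= sumR (M - n) (fun i => f (n + i)%nat)) by (apply sumR_nonneg; auto). lra.
Qed.

Lemma sumR_ge_first m f : (0 < m)%nat -> (forall i, (i < m)%nat -> 0 <= f i) -> f O <= sumR m f.
Proof.
  intros Hm H. replace m with (1 + (m - 1))%nat by lia. rewrite sumR_add.
  assert (0 <= sumR (m - 1) (fun i => f (1 + i)%nat)) by (apply sumR_nonneg; intros; apply H; lia).
  cbn [sumR]; lra.
Qed.

Lemma sumR_swap a b f :
  sumR a (fun i => sumR b (fun j => f i j)) = sumR b (fun j => sumR a (fun i => f i j)).
Proof.
  induction a; simpl.
  - now rewrite sumR_zero.
  - rewrite IHa, <- sumR_plus. easy.
Qed.

Lemma sumR_sq n f : sumR n f ^ 2 = sumR n (fun k => sumR n (fun l => f k * f l)).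
Proof.
  transitivity (sumR n (fun k => sumR n f * f k)).
  - rewrite sumR_scal. ring.
  - apply sumR_ext; intros. rewrite sumR_scal; ring.
Qed.

Lemma sumR_delta B k x : (k < B)%nat -> sumR B (fun l => if Nat.eq_dec k l then x else 0) = x.
Proof.
  intros H. replace B with (k + (1 + (B - k - 1)))%nat by lia. rewrite !sumR_add.
  rewrite (sumR_ext k _ (fun _ => 0)), (sumR_ext (B - k - 1) _ (fun _ => 0)), !sumR_const.
  - simpl. destruct (Nat.eq_dec k (k + 0)); [lra | lia].
  - intros i _. destruct (Nat.eq_dec k (k + (1 + i))); [lia | easy].
  - intros i Hi. destruct (Nat.eq_dec k i); [lia | easy].
Qed.

Lemma rsum_sumR K f : rsum K f = sumR K (fun i => f (S i)).
Proof. induction K; simpl; [easy|]. now rewrite IHK. Qed.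

Fixpoint sumC (n : nat) (f : nat -> C) : C :=
  match n with O => RtoC 0 | S k => Cplus (sumC k f) (f k) end.

Lemma sumC_ext n f g : (forall i, (i < n)%nat -> f i = g i) -> sumC n f = sumC n g.
Proof. induction n; intros H; simpl; [easy|]. rewrite IHn, H; auto. Qed.

Lemma sumC_plus n f g : sumC n (fun i => f i + g i)%C = (sumC n f + sumC n g)%C.
Proof. induction n; simpl; [ring|]. rewrite IHn; ring. Qed.

Lemma sumC_scal n c f : sumC n (fun i => c * f i)%C = (c * sumC n f)%C.
Proof. induction n; simpl; [ring|]. rewrite IHn; ring. Qed.

Lemma sumC_conj n f : Cconj (sumC n f) = sumC n (fun i => Cconj (f i)).
Proof.
  induction n; simpl.
  - apply injective_projections; simpl; ring.
  - now rewrite Cplus_conj, IHn.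
Qed.

Lemma sumC_RtoC n f : sumC n (fun i => RtoC (f i)) = RtoC (sumR n f).
Proof. induction n; simpl; [easy|]. now rewrite IHn, RtoC_plus. Qed.

Lemma fst_sumC n f : fst (sumC n f) = sumR n (fun i => fst (f i)).
Proof. induction n; simpl; [easy|]. now rewrite IHn. Qed.

Lemma snd_sumC n f : snd (sumC n f) = sumR n (fun i => snd (f i)).
Proof. induction n; simpl; [easy|]. now rewrite IHn. Qed.

Lemma sumC_add a b f : sumC (a + b) f = (sumC a f + sumC b (fun i => f (a + i)%nat))%C.
Proof.
  induction b; simpl; [rewrite Nat.add_0_r; ring|].
  rewrite Nat.add_succ_r; simpl; rewrite IHb; ring.
Qed.

Lemma sumC_swap a b f :
  sumC a (fun i => sumC b (fun j => f i j)) = sumC b (fun j => sumC a (fun i => f i j)).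
Proof.
  induction a; simpl.
  - induction b; simpl; [easy|]. rewrite <- IHb; ring.
  - rewrite IHa, <- sumC_plus. easy.
Qed.

Lemma sumC_block B m f : sumC (B * m) f = sumC B (fun k => sumC m (fun r => f (k * m + r)%nat)).
Proof. induction B; simpl; [easy|]. now rewrite Nat.add_comm, sumC_add, IHB. Qed.

Lemma sumC_zero n : sumC n (fun _ => RtoC 0) = RtoC 0.
Proof. now rewrite sumC_RtoC, sumR_zero. Qed.

(* Each residue class is padded with zeros to [K] terms. *)
Lemma sumC_classes K m f : (0 < m)%nat ->
  sumC K f
  = sumC m (fun r => sumC K (fun k => if Nat.ltb (k * m + r) K then f (k * m + r)%nat else RtoC 0)).
Proof.
  intros Hm. transitivity (sumC (K * m) (fun i => if Nat.ltb i K then f i else RtoC 0)).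
  - replace (K * m)%nat with (K + (K * m - K))%nat by nia.
    rewrite sumC_add, (sumC_ext (K * m - K) _ (fun _ => RtoC 0)), sumC_zero, Cplus_0_r.
    + apply sumC_ext. intros i Hi. now destruct (Nat.ltb_spec i K); [|lia].
    + intros i _. now destruct (Nat.ltb_spec (K + i) K); [lia|].
  - now rewrite sumC_block, sumC_swap.
Qed.

Lemma csum_sumC K f : csum K f = sumC K (fun i => f (S i)).
Proof. induction K; simpl; [easy|]. now rewrite IHK. Qed.

Lemma sumC_seq m g : sumC m g = fold_right Cplus (RtoC 0) (map g (seq 0 m)).
Proof.
  induction m; [easy|]. rewrite seq_S, map_app, fold_right_app. simpl. rewrite IHm.
  generalize (map g (seq 0 m)). intros l. induction l as [|x l IHl]; simpl; [ring|].
  rewrite <- IHl; ring.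
Qed.

Lemma fold_Cplus_perm l l' :
  Permutation l l' -> fold_right Cplus (RtoC 0) l = fold_right Cplus (RtoC 0) l'.
Proof. induction 1; simpl; try congruence; ring. Qed.

Definition lsum {X} (L : list X) (g : X -> R) : R := fold_right Rplus 0 (map g L).

Lemma lsum_le {X} (L : list X) f g : (forall x, In x L -> f x <= g x) -> lsum L f <= lsum L g.
Proof.
  unfold lsum. induction L as [|x L IH]; intros H; simpl; [lra|].
  assert (f x <= g x) by auto with datatypes.
  assert (fold_right Rplus 0 (map f L) <= fold_right Rplus 0 (map g L)) by auto with datatypes. lra.
Qed.

Lemma lsum_scal {X} (L : list X) c g : lsum L (fun x => c * g x) = c * lsum L g.
Proof. unfold lsum. induction L; simpl; [lra|]. rewrite IHL; lra. Qed.

Lemma lsum_ext {X} (L : list X) f g : (forall x, In x L -> f x = g x) -> lsum L f = lsum L g.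
Proof. intros H. unfold lsum. now rewrite (map_ext_in f g L H). Qed.

(** * Bessel's inequality *)

Lemma Cconj_RtoC x : Cconj (RtoC x) = RtoC x.
Proof. apply injective_projections; simpl; ring. Qed.

Lemma Cmult_eq_0_l (z w : C) : (z * w)%C = RtoC 0 -> w <> RtoC 0 -> z = RtoC 0.
Proof. intros E Hw. replace z with (z * w / w)%C by (field; exact Hw). rewrite E. field; exact Hw. Qed.

Definition cinner (m : nat) (u v : nat -> C) : C := sumC m (fun r => (u r * Cconj (v r))%C).

Definition vnorm2 (m : nat) (u : nat -> C) : R := sumR m (fun r => Cmod (u r) ^ 2).

Lemma vnorm2_nonneg m u : 0 <= vnorm2 m u.
Proof. apply sumR_nonneg. intros; apply pow2_ge_0. Qed.

Lemma cinner_self m u : cinner m u u = RtoC (vnorm2 m u).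
Proof. unfold cinner, vnorm2. rewrite <- sumC_RtoC. apply sumC_ext; intros. now rewrite Cmod2_conj. Qed.

Lemma cinner_conj m u v : cinner m v u = Cconj (cinner m u v).
Proof.
  unfold cinner. rewrite sumC_conj. apply sumC_ext; intros. rewrite Cmult_conj, Cconj_conj; ring.
Qed.

Lemma cinner_sub_scal_l m u v w c :
  cinner m (fun r => u r - c * v r)%C w = (cinner m u w - c * cinner m v w)%C.
Proof.
  unfold cinner. rewrite <- sumC_scal.
  rewrite (sumC_ext m _ (fun r => u r * Cconj (w r) + (- c) * (v r * Cconj (w r))))%C by (intros; ring).
  rewrite sumC_plus, !sumC_scal. ring.
Qed.

Lemma vnorm2_sub_proj m Y w : 0 < vnorm2 m w ->
  vnorm2 m (fun r => Y r - (cinner m Y w / RtoC (vnorm2 m w)) * w r)%C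
  = vnorm2 m Y - Cmod (cinner m Y w) ^ 2 / vnorm2 m w.
Proof.
  intros Hw. set (p := cinner m Y w). set (nu := vnorm2 m w).
  set (Y' := fun r => (Y r - p / RtoC nu * w r)%C).
  assert (Hnu : nu <> 0) by (apply Rgt_not_eq; exact Hw).
  assert (HnuC : RtoC nu <> RtoC 0) by (intros E; now apply RtoC_inj in E).
  apply RtoC_inj. rewrite <- cinner_self, RtoC_minus, RtoC_div, Cmod2_conj by exact Hnu.
  unfold Y' at 1. rewrite cinner_sub_scal_l, (cinner_conj m Y' Y), (cinner_conj m Y' w).
  unfold Y'. rewrite !cinner_sub_scal_l, (cinner_conj m Y w), !cinner_self. fold p nu.
  rewrite !Cminus_conj, !Cmult_conj, Cdiv_conj, !Cconj_conj, !Cconj_RtoC by auto.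
  field. auto.
Qed.

Lemma bessel_inequality {X} m (L : list X) (w : X -> nat -> C) M Y : 0 <= M ->
  ForallOrdPairs (fun x y => cinner m (w x) (w y) = RtoC 0) L ->
  (forall x, In x L -> 0 < vnorm2 m (w x) <= M) ->
  lsum L (fun x => Cmod (cinner m Y (w x)) ^ 2) <= M * vnorm2 m Y.
Proof.
  intros HM Horth. revert Y.
  induction Horth as [|x l Hx Hl IH]; intros Y Hnorm; unfold lsum; cbn [map fold_right].
  - pose proof (vnorm2_nonneg m Y). nra.
  - (* Projecting [Y] off [w x] keeps its coefficients along the later, orthogonal vectors and
       lowers its squared norm by [|p|^2 / nu >= |p|^2 / M]. *)
    destruct (Hnorm x (or_introl eq_refl)) as [Hw HwM].
    set (p := cinner m Y (w x)). set (nu := vnorm2 m (w x)) in *.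
    set (Y' := fun r => (Y r - p / RtoC nu * w x r)%C).
    assert (Htail : forall y, In y l -> cinner m Y (w y) = cinner m Y' (w y)).
    { intros y Hy. unfold Y'. rewrite cinner_sub_scal_l.
      rewrite (proj1 (Forall_forall _ l) Hx y Hy). ring. }
    assert (IH' := IH Y' (fun y Hy => Hnorm y (or_intror Hy))).
    fold (lsum l (fun y => Cmod (cinner m Y (w y)) ^ 2)).
    rewrite (lsum_ext l _ (fun y => Cmod (cinner m Y' (w y)) ^ 2)) by (intros; now rewrite Htail).
    unfold Y', p, nu in IH'. rewrite vnorm2_sub_proj in IH' by exact Hw. fold p nu Y' in IH'.
    assert (0 <= Cmod p ^ 2) by apply pow2_ge_0.
    assert (HMnu : 1 <= M / nu).
    { apply (Rmult_le_reg_r nu); [lra|]. unfold Rdiv.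
      rewrite Rmult_assoc, Rinv_l by (apply Rgt_not_eq; lra). lra. }
    assert (M * (Cmod p ^ 2 / nu) = Cmod p ^ 2 * (M / nu)) by (unfold Rdiv; ring).
    nra.
Qed.

Lemma NoDup_ForallOrdPairs {X} (P : X -> X -> Prop) (L : list X) : NoDup L ->
  (forall x y, In x L -> In y L -> x <> y -> P x y) -> ForallOrdPairs P L.
Proof.
  induction 1 as [|x L Hx HL IH]; intros H; constructor.
  - apply Forall_forall. intros y Hy. apply H; simpl; auto. intros ->; contradiction.
  - apply IH. intros; apply H; simpl; auto.
Qed.

(** * Orthogonality of Dirichlet characters *)

Lemma periodic_add_mul {A} (g : nat -> A) m :
  (forall n, g (n + m)%nat = g n) -> forall k n, g (n + k * m)%nat = g n.
Proof.
  intros H k; induction k; intros n; simpl; [now rewrite Nat.add_0_r|].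
  replace (n + (m + k * m))%nat with (n + k * m + m)%nat by lia. now rewrite H.
Qed.

Lemma periodic_mod {A} (g : nat -> A) m : (m <> 0)%nat ->
  (forall n, g (n + m)%nat = g n) -> forall n, g n = g (n mod m).
Proof.
  intros Hm H n. rewrite (Nat.div_mod_eq n m) at 1.
  rewrite Nat.add_comm, Nat.mul_comm. now apply periodic_add_mul.
Qed.

Lemma mul_mod_inj a m r r' : Nat.gcd a m = 1%nat -> (r < m)%nat -> (r' < m)%nat ->
  (a * r) mod m = (a * r') mod m -> r = r'.
Proof.
  intros Hg. revert r r'.
  assert (Hle : forall r r', (r <= r')%nat -> (r' < m)%nat -> (a * r) mod m = (a * r') mod m -> r = r').
  { intros r r' Hrr' Hr' E.
    pose proof (Nat.div_mod_eq (a * r) m) as D. pose proof (Nat.div_mod_eq (a * r') m) as D'.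
    assert (Hd : Nat.divide m (a * (r' - r))).
    { exists (a * r' / m - a * r / m)%nat.
      rewrite Nat.mul_sub_distr_l, Nat.mul_sub_distr_r.
      rewrite (Nat.mul_comm (a * r' / m)), (Nat.mul_comm (a * r / m)). lia. }
    apply Nat.gauss in Hd; [|now rewrite Nat.gcd_comm].
    destruct (Nat.eq_dec (r' - r) 0); [lia|].
    apply Nat.divide_pos_le in Hd; lia. }
  intros r r' Hr Hr' E. destruct (Nat.le_ge_cases r r'); [|symmetry]; apply Hle; auto.
Qed.

Lemma sumC_reindex_unit (g : nat -> C) m a : (m <> 0)%nat ->
  (forall n, g (n + m)%nat = g n) -> Nat.gcd a m = 1%nat ->
  sumC m (fun r => g (a * r)%nat) = sumC m g.
Proof.
  intros Hm Hp Hg.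
  rewrite (sumC_ext m _ (fun r => g ((a * r) mod m)%nat)) by (intros; now apply periodic_mod).
  rewrite !sumC_seq, <- (map_map (fun r => ((a * r) mod m)%nat) g).
  apply fold_Cplus_perm, Permutation_map, Permutation_map_same_l.
  - apply NoDup_map_NoDup_ForallPairs; [|apply seq_NoDup].
    intros x y Hx Hy E. apply in_seq in Hx, Hy. apply (mul_mod_inj a m); auto; lia.
  - intros y Hy. apply in_map_iff in Hy. destruct Hy as [x [<- _]].
    apply in_seq. split; [lia|]. simpl. now apply Nat.mod_upper_bound.
Qed.

Lemma sumC_shift_periodic (g : nat -> C) m :
  (forall n, g (n + m)%nat = g n) -> sumC m (fun r => g (S r)) = sumC m g.
Proof.
  intros Hp. pose proof (sumC_add 1 m g) as E.
  replace (1 + m)%nat with (S m) in E by lia. cbn [sumC Nat.add] in E.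
  rewrite (Hp O : g m = g O) in E.
  apply (f_equal (fun z => z - g O)%C) in E. ring_simplify in E. rewrite <- E. ring.
Qed.

Section DirichletCharacters.
Variable m : nat.
Hypothesis m_pos : (0 < m)%nat.

(* The substitution [r := a r] permutes the residues mod [m] and multiplies the sum by
   [chi a * conj (psi a)]. *)
Lemma dirichlet_character_inner_twist chi psi a :
  dirichlet_character m chi -> dirichlet_character m psi -> Nat.gcd a m = 1%nat ->
  cinner m (fun r => chi (S r)) (fun r => psi (S r)) <> RtoC 0 ->
  (chi a * Cconj (psi a))%C = 1.
Proof.
  intros [Pc [Mc _]] [Pp [Mp _]] Ha.
  set (h := fun n => (chi n * Cconj (psi n))%C).
  assert (Ph : forall n, h (n + m)%nat = h n) by (intros; unfold h; now rewrite Pc, Pp).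
  change (cinner m _ _) with (sumC m (fun r => h (S r))).
  rewrite sumC_shift_periodic by exact Ph. intros Hs.
  assert (E : sumC m (fun r => h (a * r)%nat) = (chi a * Cconj (psi a) * sumC m h)%C).
  { rewrite <- sumC_scal. apply sumC_ext; intros. unfold h. rewrite Mc, Mp, Cmult_conj. ring. }
  rewrite sumC_reindex_unit in E by (auto; lia).
  assert (Z : ((1 - chi a * Cconj (psi a)) * sumC m h)%C = RtoC 0).
  { transitivity (sumC m h - chi a * Cconj (psi a) * sumC m h)%C; [ring|]. rewrite <- E. ring. }
  apply Cmult_eq_0_l in Z; [|exact Hs].
  replace (chi a * Cconj (psi a))%C with (1 - (1 - chi a * Cconj (psi a)))%C by ring.
  rewrite Z. ring.
Qed.

Lemma dirichlet_character_Cmod_one chi : dirichlet_character m chi -> Cmod (chi 1%nat) = 1.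
Proof. intros (_ & _ & H1 & _). rewrite H1. apply Cmod_1. Qed.

Lemma vnorm2_dirichlet_character_pos chi :
  dirichlet_character m chi -> 1 <= vnorm2 m (fun r => chi (S r)).
Proof.
  intros D. unfold vnorm2. rewrite <- (pow1 2), <- (dirichlet_character_Cmod_one chi D).
  apply (sumR_ge_first m (fun r => Cmod (chi (S r)) ^ 2)); auto. intros; apply pow2_ge_0.
Qed.

Lemma dirichlet_character_unit chi a : dirichlet_character m chi -> Nat.gcd a m = 1%nat ->
  (chi a * Cconj (chi a))%C = 1.
Proof.
  intros D Ha. apply dirichlet_character_inner_twist; auto.
  rewrite cinner_self. pose proof (vnorm2_dirichlet_character_pos chi D).
  intros Z. apply RtoC_inj in Z. lra.
Qed.

Lemma dirichlet_character_Cmod_le chi n : dirichlet_character m chi -> Cmod (chi n) ^ 2 <= 1.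
Proof.
  intros D. destruct (Nat.eq_dec (Nat.gcd n m) 1) as [Hn|Hn].
  - apply Req_le, RtoC_inj. rewrite Cmod2_conj. now rewrite dirichlet_character_unit.
  - destruct D as (_ & _ & _ & Z). rewrite (proj2 (Z n) Hn), Cmod_0. lra.
Qed.

Lemma vnorm2_dirichlet_character_le chi :
  dirichlet_character m chi -> vnorm2 m (fun r => chi (S r)) <= INR m.
Proof.
  intros D. rewrite <- (Rmult_1_r (INR m)), <- sumR_const.
  apply sumR_le. intros; now apply dirichlet_character_Cmod_le.
Qed.

Lemma dirichlet_character_orth chi psi :
  dirichlet_character m chi -> dirichlet_character m psi -> chi <> psi ->
  cinner m (fun r => chi (S r)) (fun r => psi (S r)) = RtoC 0.
Proof.
  intros Dc Dp Hne.
  destruct (not_all_ex_not _ _ (fun H => Hne (functional_extensionality _ _ H))) as [a Ha].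
  assert (Hg : Nat.gcd a m = 1%nat).
  { destruct (Nat.eq_dec (Nat.gcd a m) 1) as [|Hn]; [easy|]. exfalso. apply Ha.
    destruct Dc as (_ & _ & _ & Zc), Dp as (_ & _ & _ & Zp).
    now rewrite (proj2 (Zc a) Hn), (proj2 (Zp a) Hn). }
  apply NNPP. intros Hs. apply Ha.
  pose proof (dirichlet_character_inner_twist chi psi a Dc Dp Hg Hs) as Z.
  transitivity (chi a * (psi a * Cconj (psi a)))%C.
  - rewrite dirichlet_character_unit by easy. ring.
  - replace (chi a * (psi a * Cconj (psi a)))%C with (psi a * (chi a * Cconj (psi a)))%C by ring.
    rewrite Z. ring.
Qed.

End DirichletCharacters.

(** * Riemann integrals *)

Lemma ex_RInt_of_continuous (g : R -> R) a b : (forall t, continuous g t) -> ex_RInt g a b.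
Proof. intros H. apply (ex_RInt_continuous (V := R_CompleteNormedModule)). auto. Qed.

Lemma continuous_sq (g : R -> R) t : continuous g t -> continuous (fun x => g x ^ 2) t.
Proof.
  intros H. apply (continuous_comp g (fun y => y ^ 2)); [exact H|].
  apply (ex_derive_continuous (K := R_AbsRing) (V := R_NormedModule)). auto_derive. easy.
Qed.

Lemma is_RInt_sumR B (g : nat -> R -> R) (v : nat -> R) a b :
  (forall k, (k < B)%nat -> is_RInt (g k) a b (v k)) ->
  is_RInt (fun t => sumR B (fun k => g k t)) a b (sumR B v).
Proof.
  induction B; intros H.
  - replace (sumR 0 v) with (scal (b - a) 0) by (unfold scal; simpl; unfold mult; simpl; ring).
    apply (is_RInt_const (V := R_NormedModule)).
  - simpl. apply (is_RInt_plus (fun t => sumR B (fun k => g k t)) (g B)); auto.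
Qed.

Lemma is_RInt_lsum {X} (L : list X) (f : X -> R -> R) (v : X -> R) a b :
  (forall x, In x L -> is_RInt (f x) a b (v x)) ->
  is_RInt (fun t => lsum L (fun x => f x t)) a b (lsum L v).
Proof.
  induction L as [|x L IH]; intros H.
  - replace (lsum nil v) with (scal (b - a) 0) by (unfold lsum, scal; simpl; unfold mult; simpl; ring).
    apply (is_RInt_const (V := R_NormedModule)).
  - unfold lsum; simpl.
    apply (is_RInt_plus (f x) (fun t => fold_right Rplus 0 (map (fun y => f y t) L)));
      auto with datatypes.
Qed.

Lemma RInt_sq_le (g : R -> R) a b : a < b -> ex_RInt g a b -> ex_RInt (fun t => g t ^ 2) a b ->
  RInt g a b ^ 2 <= (b - a) * RInt (fun t => g t ^ 2) a b.
Proof.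
  (* Integrate [(g - c)^2 >= 0], where [c] is the mean value of [g]. *)
  intros Hab H1 H2. set (I1 := RInt g a b). set (I2 := RInt (fun t => g t ^ 2) a b).
  set (c := I1 / (b - a)).
  assert (H3 : is_RInt (fun t => g t ^ 2 + (- 2 * c) * g t + c ^ 2) a b
                       (I2 + (- 2 * c) * I1 + (b - a) * c ^ 2)).
  { apply (is_RInt_plus (fun t => g t ^ 2 + (- 2 * c) * g t) (fun _ => c ^ 2)).
    - apply (is_RInt_plus (fun t => g t ^ 2) (fun t => (- 2 * c) * g t)).
      + now apply (RInt_correct (V := R_CompleteNormedModule)).
      + apply (is_RInt_scal g). now apply (RInt_correct (V := R_CompleteNormedModule)).
    - replace ((b - a) * c ^ 2) with (scal (b - a) (c ^ 2))
        by (unfold scal; simpl; unfold mult; simpl; ring).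
      apply (is_RInt_const (V := R_NormedModule)). }
  assert (H4 : 0 <= RInt (fun t => g t ^ 2 + (- 2 * c) * g t + c ^ 2) a b).
  { apply RInt_ge_0; [lra | eexists; eauto |]. intros x _. pose proof (pow2_ge_0 (g x - c)). nra. }
  rewrite (is_RInt_unique _ _ _ _ H3) in H4. unfold c in H4.
  replace (I2 + - 2 * (I1 / (b - a)) * I1 + (b - a) * (I1 / (b - a)) ^ 2)
    with (((b - a) * I2 - I1 ^ 2) * / (b - a)) in H4 by (field; lra).
  assert (0 < / (b - a)) by (apply Rinv_0_lt_compat; lra). nra.
Qed.

(** * Mean square of trigonometric polynomials *)

Lemma Cmod_sq (z : C) : Cmod z ^ 2 = fst z ^ 2 + snd z ^ 2.
Proof. unfold Cmod. apply pow2_sqrt. nra. Qed.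

Definition tpoly (B : nat) (c : nat -> C) (th : nat -> R) (t : R) : C :=
  sumC B (fun k => Cmult (c k) (cos (t * th k), - sin (t * th k))).

Lemma fst_tpoly B c th t :
  fst (tpoly B c th t) = sumR B (fun k => fst (c k) * cos (t * th k) + snd (c k) * sin (t * th k)).
Proof. unfold tpoly. rewrite fst_sumC. apply sumR_ext; intros; simpl; ring. Qed.

Lemma snd_tpoly B c th t :
  snd (tpoly B c th t) = sumR B (fun k => snd (c k) * cos (t * th k) - fst (c k) * sin (t * th k)).
Proof. unfold tpoly. rewrite snd_sumC. apply sumR_ext; intros; simpl; ring. Qed.

Lemma ex_derive_sumR B (f : nat -> R -> R) x :
  (forall k, ex_derive (f k) x) -> ex_derive (fun t => sumR B (fun k => f k t)) x.
Proof.
  intros H. induction B; simpl; [apply ex_derive_const|].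
  now apply (ex_derive_plus (fun t => sumR B (fun k => f k t)) (f B)).
Qed.

Lemma continuous_Cmod_tpoly B c th x : continuous (fun t => Cmod (tpoly B c th t)) x.
Proof.
  apply (continuous_comp (fun t => fst (tpoly B c th t) ^ 2 + snd (tpoly B c th t) ^ 2) sqrt).
  - apply (ex_derive_continuous (K := R_AbsRing) (V := R_NormedModule)).
    apply (ex_derive_plus (fun t => fst (tpoly B c th t) ^ 2) (fun t => snd (tpoly B c th t) ^ 2));
      apply (ex_derive_pow (fun t => _ (tpoly B c th t))).
    + apply (ex_derive_ext
               (fun t => sumR B (fun k => fst (c k) * cos (t * th k) + snd (c k) * sin (t * th k))));
        [intros; now rewrite fst_tpoly|].
      apply ex_derive_sumR. intros; auto_derive; auto.
    + apply (ex_derive_ext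
               (fun t => sumR B (fun k => snd (c k) * cos (t * th k) - fst (c k) * sin (t * th k))));
        [intros; now rewrite snd_tpoly|].
      apply ex_derive_sumR. intros; auto_derive; auto.
  - apply continuity_pt_filterlim, continuity_pt_sqrt. nra.
Qed.

Definition cos_integral (T d : R) : R := if Req_EM_T d 0 then 2 * T else 2 * sin (T * d) / d.

Lemma is_RInt_cos_sin T x y d :
  is_RInt (fun t => x * cos (t * d) - y * sin (t * d)) (- T) T (x * cos_integral T d).
Proof.
  unfold cos_integral. destruct (Req_EM_T d 0) as [->|Hd].
  - replace (x * (2 * T)) with (scal (T - - T) x) by (unfold scal; simpl; unfold mult; simpl; ring).
    apply (is_RInt_ext (V := R_NormedModule) (fun _ => x));
      [intros; simpl; rewrite Rmult_0_r, cos_0, sin_0; ring|].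
    apply (is_RInt_const (V := R_NormedModule)).
  - set (F := fun t => x * sin (t * d) / d + y * cos (t * d) / d).
    replace (x * (2 * sin (T * d) / d)) with (minus (F T) (F (- T))).
    + apply (is_RInt_derive F).
      * intros t _. unfold F. auto_derive; [easy|]. field. exact Hd.
      * intros t _. apply (ex_derive_continuous (K := R_AbsRing) (V := R_NormedModule)).
        auto_derive. easy.
    + unfold F, minus, plus, opp; simpl.
      replace (- T * d) with (- (T * d)) by ring. rewrite sin_neg, cos_neg. field. exact Hd.
Qed.

Lemma is_RInt_Cmod_tpoly_sq B c th T :
  is_RInt (fun t => Cmod (tpoly B c th t) ^ 2) (- T) T
    (sumR B (fun k => sumR B (fun l => fst (c k * Cconj (c l))%C * cos_integral T (th k - th l)))).
Proof.
  eapply is_RInt_ext.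
  2: { apply is_RInt_sumR. intros k _. apply is_RInt_sumR. intros l _.
       apply (is_RInt_cos_sin T _ (fst (c k) * snd (c l) - snd (c k) * fst (c l))). }
  intros t _. rewrite Cmod_sq, fst_tpoly, snd_tpoly, !sumR_sq, <- sumR_plus.
  apply sumR_ext; intros k _. rewrite <- sumR_plus. apply sumR_ext; intros l _.
  replace (t * (th k - th l)) with (t * th k - t * th l) by ring.
  rewrite cos_minus, sin_minus. simpl. ring.
Qed.

Definition ndist (k l : nat) : nat := (k - l + (l - k))%nat.

(* The [d = 0] term is [/ 0 = 0], so [harmonic n] is [1 + 1/2 + ... + 1/(n-1)]. *)
Definition harmonic (n : nat) : R := sumR n (fun d => / INR d).

Lemma inv_INR_0 : / INR 0 = 0.
Proof. exact Rinv_0. Qed.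

Lemma inv_INR_nonneg d : 0 <= / INR d.
Proof.
  destruct d; [rewrite inv_INR_0; lra|].
  apply Rlt_le, Rinv_0_lt_compat, lt_0_INR. lia.
Qed.

Lemma harmonic_le_harmonic n M : (n <= M)%nat -> harmonic n <= harmonic M.
Proof. intros H. apply sumR_le_widen; auto using inv_INR_nonneg. Qed.

Lemma sum_inv_ndist_le k B : sumR B (fun l => / INR (ndist k l)) <= harmonic (S k) + harmonic B.
Proof.
  revert B. induction k; intros B.
  - rewrite (sumR_ext B _ (fun l => / INR l)) by (intros; unfold ndist; f_equal; f_equal; lia).
    unfold harmonic. cbn [sumR]. rewrite inv_INR_0. lra.
  - destruct B as [|B].
    + assert (0 <= harmonic (S (S k))) by (apply sumR_nonneg; auto using inv_INR_nonneg).
      change (sumR 0 _) with 0. change (harmonic 0) with 0. lra.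
    + replace (S B) with (1 + B)%nat by lia. unfold harmonic in *. rewrite !sumR_add.
      rewrite (sumR_ext B (fun i => / INR (ndist (S k) (1 + i))) (fun l => / INR (ndist k l)))
        by (intros; unfold ndist; f_equal; f_equal; lia).
      pose proof (IHk B).
      pose proof (sumR_le_widen B (1 + B) (fun d => / INR d) ltac:(lia) inv_INR_nonneg).
      rewrite sumR_add in H0. change (sumR (S (S k)) (fun d => / INR d))
        with (sumR (S k) (fun d => / INR d) + / INR (S k)).
      cbn [sumR] in *. replace (ndist (S k) 0) with (S k) by (unfold ndist; lia).
      rewrite inv_INR_0 in *. lra.
Qed.

Lemma sum_inv_ndist_le_harmonic k B :
  (k < B)%nat -> sumR B (fun l => / INR (ndist k l)) <= 2 * harmonic B.
Proof.
  intros H. pose proof (sum_inv_ndist_le k B). pose proof (harmonic_le_harmonic (S k) B H). lra.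
Qed.

Lemma ln_le_sub_1 x : 0 < x -> ln x <= x - 1.
Proof. intros Hx. pose proof (exp_ineq1_le (ln x)). rewrite exp_ln in H; lra. Qed.

Lemma harmonic_S_le_ln n : (1 <= n)%nat -> harmonic (S n) <= 1 + ln (INR n).
Proof.
  induction 1 as [|n Hn IH].
  - unfold harmonic. cbn [sumR]. rewrite inv_INR_0. change (INR 1) with 1. rewrite Rinv_1, ln_1. lra.
  - unfold harmonic in *. change (sumR (S (S n)) _) with (sumR (S n) (fun d => / INR d) + / INR (S n)).
    assert (0 < INR n) by (apply lt_0_INR; lia).
    pose proof (ln_le_sub_1 (INR n / INR (S n))).
    rewrite ln_div in H0 by (rewrite ?S_INR; lra).
    assert (INR n / INR (S n) - 1 = - / INR (S n)) by (rewrite S_INR; field; lra).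
    assert (0 < INR n / INR (S n)) by (apply Rdiv_lt_0_compat; rewrite ?S_INR; lra).
    lra.
Qed.

Lemma harmonic_le_ln n : (1 <= n)%nat -> harmonic n <= 1 + ln (INR n).
Proof.
  intros Hn. pose proof (harmonic_S_le_ln n Hn).
  pose proof (harmonic_le_harmonic n (S n) (Nat.le_succ_diag_r n)). lra.
Qed.

Lemma Rabs_fst_mul_conj_le (u v : C) : Rabs (fst (u * Cconj v)%C) <= (Cmod u ^ 2 + Cmod v ^ 2) / 2.
Proof.
  rewrite !Cmod_sq. destruct u as [a b], v as [c d]. simpl.
  pose proof (pow2_ge_0 (a - c)). pose proof (pow2_ge_0 (b - d)).
  pose proof (pow2_ge_0 (a + c)). pose proof (pow2_ge_0 (b + d)).
  apply Rabs_le. split; nra.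
Qed.

Lemma Rabs_cos_integral_le T d : d <> 0 -> Rabs (cos_integral T d) <= 2 / Rabs d.
Proof.
  intros Hd. unfold cos_integral. destruct (Req_EM_T d 0) as [|_]; [contradiction|].
  assert (0 < Rabs d) by (apply Rabs_pos_lt; exact Hd).
  assert (Rabs (sin (T * d)) <= 1) by (apply Rabs_le, SIN_bound).
  unfold Rdiv. rewrite Rabs_mult, Rabs_mult, Rabs_inv, (Rabs_right 2) by lra.
  apply Rmult_le_compat_r; [apply Rlt_le, Rinv_0_lt_compat; lra | lra].
Qed.

Lemma cos_integral_cross_le T delta (u v : C) d n : 0 < delta -> (0 < n)%nat ->
  (u <> RtoC 0 -> v <> RtoC 0 -> delta * INR n <= Rabs d) ->
  fst (u * Cconj v)%C * cos_integral T d <= (Cmod u ^ 2 + Cmod v ^ 2) * / INR n / delta.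
Proof.
  intros Hdelta Hn Hsep.
  assert (Hn1 : 1 <= INR n) by (apply (le_INR 1); lia).
  assert (Hrhs : 0 <= (Cmod u ^ 2 + Cmod v ^ 2) * / INR n / delta).
  { apply Rmult_le_pos; [apply Rmult_le_pos|]; auto using inv_INR_nonneg.
    - pose proof (pow2_ge_0 (Cmod u)); pose proof (pow2_ge_0 (Cmod v)); lra.
    - apply Rlt_le, Rinv_0_lt_compat; lra. }
  destruct (classic (u = RtoC 0)) as [->|Hu]; [simpl; lra|].
  destruct (classic (v = RtoC 0)) as [->|Hv]; [simpl; lra|].
  specialize (Hsep Hu Hv).
  assert (Hd : 0 < Rabs d) by nra.
  assert (d <> 0) by (intros ->; rewrite Rabs_R0 in Hd; lra).
  pose proof (Rabs_fst_mul_conj_le u v). pose proof (Rabs_cos_integral_le T d H).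
  set (E := Cmod u ^ 2 + Cmod v ^ 2) in *.
  assert (HE : 0 <= E)
    by (unfold E; pose proof (pow2_ge_0 (Cmod u)); pose proof (pow2_ge_0 (Cmod v)); lra).
  apply (Rle_trans _ (Rabs (fst (u * Cconj v)%C) * Rabs (cos_integral T d))).
  { rewrite <- Rabs_mult. apply Rle_abs. }
  apply (Rle_trans _ (E / 2 * (2 / Rabs d))).
  { apply Rmult_le_compat; auto using Rabs_pos. }
  replace (E / 2 * (2 / Rabs d)) with (E / Rabs d) by (field; lra).
  replace (E * / INR n / delta) with (E / (delta * INR n)) by (field; lra).
  apply Rmult_le_compat_l; [easy|]. apply Rinv_le_contravar; nra.
Qed.

Lemma cos_integral_term_le T delta (c : nat -> C) (th : nat -> R) k l : 0 < delta ->
  (c k <> RtoC 0 -> c l <> RtoC 0 -> delta * INR (ndist k l) <= Rabs (th k - th l)) ->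
  fst (c k * Cconj (c l))%C * cos_integral T (th k - th l)
  <= (if Nat.eq_dec k l then 2 * T * Cmod (c k) ^ 2 else 0)
     + (Cmod (c k) ^ 2 + Cmod (c l) ^ 2) * / INR (ndist k l) / delta.
Proof.
  intros Hdelta Hsep. destruct (Nat.eq_dec k l) as [<-|Hkl].
  - replace (ndist k k) with O by (unfold ndist; lia).
    rewrite Rminus_diag, inv_INR_0. unfold cos_integral.
    destruct (Req_EM_T 0 0) as [_|]; [|contradiction].
    replace (fst (c k * Cconj (c k))%C) with (Cmod (c k) ^ 2)
      by (now rewrite <- (Cmod2_conj (c k))).
    unfold Rdiv. lra.
  - rewrite Rplus_0_l. apply cos_integral_cross_le; auto. unfold ndist; lia.
Qed.

Lemma sum_sum_inv_ndist_le B (E : nat -> R) : (forall k, 0 <= E k) ->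
  sumR B (fun k => sumR B (fun l => (E k + E l) * / INR (ndist k l))) <= 4 * harmonic B * sumR B E.
Proof.
  intros HE.
  set (D := sumR B (fun k => E k * sumR B (fun l => / INR (ndist k l)))).
  assert (Hsplit : sumR B (fun k => sumR B (fun l => (E k + E l) * / INR (ndist k l)))
                   = D + sumR B (fun k => sumR B (fun l => E l * / INR (ndist k l)))).
  { unfold D. rewrite <- sumR_plus. apply sumR_ext; intros k _.
    rewrite <- sumR_scal, <- sumR_plus. apply sumR_ext; intros; ring. }
  assert (Hsym : sumR B (fun k => sumR B (fun l => E l * / INR (ndist k l))) = D).
  { unfold D. rewrite sumR_swap. apply sumR_ext; intros l _. rewrite <- sumR_scal.
    apply sumR_ext; intros k _. unfold ndist. f_equal. f_equal. f_equal. lia. }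
  assert (HD : D <= 2 * harmonic B * sumR B E).
  { unfold D. rewrite <- sumR_scal. apply sumR_le. intros k Hk.
    pose proof (sum_inv_ndist_le_harmonic k B Hk). specialize (HE k). nra. }
  lra.
Qed.

(* The off-diagonal terms are bounded through [|cos_integral T d| <= 2 / |d|], a crude
   substitute for Hilbert's inequality that costs only a logarithm. *)
Lemma RInt_Cmod_tpoly_sq_le B c th T delta : 0 < delta ->
  (forall k l, (k < B)%nat -> (l < B)%nat -> c k <> RtoC 0 -> c l <> RtoC 0 ->
     delta * INR (ndist k l) <= Rabs (th k - th l)) ->
  RInt (fun t => Cmod (tpoly B c th t) ^ 2) (- T) T
  <= (2 * T + 4 * harmonic B / delta) * vnorm2 B c.
Proof.
  intros Hdelta Hsep. rewrite (is_RInt_unique _ _ _ _ (is_RInt_Cmod_tpoly_sq B c th T)).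
  set (E := fun k => Cmod (c k) ^ 2).
  eapply Rle_trans.
  { apply sumR_le; intros k Hk. apply sumR_le; intros l Hl.
    apply (cos_integral_term_le T delta); auto. }
  rewrite (sumR_ext B _
    (fun k => 2 * T * E k + / delta * sumR B (fun l => (E k + E l) * / INR (ndist k l)))).
  2: { intros k Hk. rewrite sumR_plus, sumR_delta by easy. rewrite <- sumR_scal.
       f_equal. apply sumR_ext; intros. unfold E, Rdiv. ring. }
  rewrite sumR_plus, !sumR_scal.
  pose proof (sum_sum_inv_ndist_le B E (fun k => pow2_ge_0 _)).
  assert (0 < / delta) by (apply Rinv_0_lt_compat; lra).
  unfold vnorm2. fold E. unfold Rdiv.
  replace ((2 * T + 4 * harmonic B * / delta) * sumR B E)
    with (2 * T * sumR B E + / delta * (4 * harmonic B * sumR B E)) by ring.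
  apply Rplus_le_compat_l, Rmult_le_compat_l; lra.
Qed.

(** * Dirichlet polynomials split into residue classes *)

Definition dpoly (K : nat) (a chi : nat -> C) (s t : R) : C :=
  csum K (fun n => Cmult (Cmult (a n) (chi n)) (npow_neg n s t)).

Definition dcoef (a : nat -> C) (s : R) (n : nat) : C := Cmult (a n) (RtoC (Rpower (INR n) (- s))).

Lemma dpoly_tpoly K a chi s t :
  dpoly K a chi s t = tpoly K (fun i => Cmult (chi (S i)) (dcoef a s (S i))) (fun i => ln (INR (S i))) t.
Proof.
  unfold dpoly, tpoly, dcoef. rewrite csum_sumC. apply sumC_ext; intros.
  apply injective_projections; unfold npow_neg; simpl; ring.
Qed.

Lemma continuous_Cmod_dpoly K a chi s x : continuous (fun t => Cmod (dpoly K a chi s t)) x.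
Proof.
  apply (continuous_ext (fun t => Cmod (tpoly K (fun i => Cmult (chi (S i)) (dcoef a s (S i)))
                                               (fun i => ln (INR (S i))) t)));
    [intros; now rewrite dpoly_tpoly|].
  apply continuous_Cmod_tpoly.
Qed.

Lemma Cmod_dcoef_sq a s n : Cmod (dcoef a s n) ^ 2 = Cmod (a n) ^ 2 / Rpower (INR n) (2 * s).
Proof.
  unfold dcoef.
  rewrite Cmod_mult, Cmod_R, Rabs_right, Rpow_mult_distr by (apply Rle_ge, Rlt_le, exp_pos).
  replace (Rpower (INR n) (- s) ^ 2) with (/ Rpower (INR n) (2 * s)).
  - unfold Rdiv. ring.
  - rewrite <- Rpower_Ropp. simpl. rewrite Rmult_1_r, <- Rpower_plus. f_equal. ring.
Qed.

(* The [r]-th residue class consists of the [n = k m + r + 1] with [k m + r < K]. *)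
Definition class_coef (a : nat -> C) (s : R) (K m r k : nat) : C :=
  if Nat.ltb (k * m + r) K then dcoef a s (S (k * m + r)) else RtoC 0.

Definition class_freq (m r k : nat) : R := ln (INR (S (k * m + r))).

Definition class_poly (a : nat -> C) (s : R) (K m r : nat) (t : R) : C :=
  tpoly K (class_coef a s K m r) (class_freq m r) t.

Lemma dpoly_classes K m a chi s t : (0 < m)%nat -> (forall n, chi (n + m)%nat = chi n) ->
  dpoly K a chi s t = sumC m (fun r => Cmult (chi (S r)) (class_poly a s K m r t)).
Proof.
  intros Hm Hp. rewrite dpoly_tpoly. unfold class_poly, tpoly. rewrite (sumC_classes K m _ Hm).
  apply sumC_ext; intros r _. rewrite <- sumC_scal. apply sumC_ext; intros k _.
  unfold class_coef, class_freq. destruct (Nat.ltb (k * m + r) K).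
  - replace (S (k * m + r)) with (S r + k * m)%nat by lia.
    rewrite (periodic_add_mul chi m Hp). ring.
  - ring.
Qed.

Definition weighted_energy (K : nat) (a : nat -> C) (s : R) : R :=
  rsum K (fun n => Cmod (a n) ^ 2 / Rpower (INR n) (2 * s)).

Lemma weighted_energy_nonneg K a s : 0 <= weighted_energy K a s.
Proof.
  unfold weighted_energy. rewrite rsum_sumR. apply sumR_nonneg.
  intros; apply Rdiv_le_0_compat; [apply pow2_ge_0 | apply exp_pos].
Qed.

Lemma class_energy K m a s : (0 < m)%nat ->
  sumR m (fun r => vnorm2 K (class_coef a s K m r)) = weighted_energy K a s.
Proof.
  intros Hm. apply RtoC_inj. unfold weighted_energy. rewrite rsum_sumR, <- !sumC_RtoC, (sumC_classes K m _ Hm).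
  apply sumC_ext; intros r _. unfold vnorm2. rewrite <- sumC_RtoC. apply sumC_ext; intros k _.
  unfold class_coef. destruct (Nat.ltb (k * m + r) K).
  - now rewrite Cmod_dcoef_sq.
  - f_equal. rewrite Cmod_0. ring.
Qed.

Lemma ln_sub_ge x y K : 0 < y <= x -> x <= K -> (x - y) / K <= ln x - ln y.
Proof.
  intros Hy HK.
  assert (H : ln (y / x) <= y / x - 1) by (apply ln_le_sub_1, Rdiv_lt_0_compat; lra).
  rewrite ln_div in H by lra.
  assert ((x - y) / K <= (x - y) / x).
  { unfold Rdiv. apply Rmult_le_compat_l; [lra|]. apply Rinv_le_contravar; lra. }
  assert ((x - y) / x = - (y / x - 1)) by (field; lra). lra.
Qed.

Lemma Rabs_ln_sub_ge x y K : 0 < x <= K -> 0 < y <= K -> Rabs (x - y) / K <= Rabs (ln x - ln y).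
Proof.
  intros Hx Hy. destruct (Rle_dec y x).
  - assert (ln y <= ln x) by (apply ln_le; lra).
    rewrite !Rabs_right by lra. apply ln_sub_ge; lra.
  - assert (ln x <= ln y) by (apply ln_le; lra).
    rewrite Rabs_left, Rabs_left1 by lra.
    replace (- (x - y)) with (y - x) by ring. replace (- (ln x - ln y)) with (ln y - ln x) by ring.
    apply ln_sub_ge; lra.
Qed.

Lemma INR_ndist k l : INR (ndist k l) = Rabs (INR k - INR l).
Proof.
  unfold ndist. destruct (Nat.le_ge_cases k l) as [H|H].
  - replace (k - l + (l - k))%nat with (l - k)%nat by lia. rewrite minus_INR by exact H.
    apply le_INR in H. rewrite Rabs_left1; lra.
  - replace (k - l + (l - k))%nat with (k - l)%nat by lia. rewrite minus_INR by exact H.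
    apply le_INR in H. rewrite Rabs_right; lra.
Qed.

Lemma class_freq_spacing a s K m r k l : class_coef a s K m r k <> RtoC 0 ->
  class_coef a s K m r l <> RtoC 0 ->
  INR m / INR K * INR (ndist k l) <= Rabs (class_freq m r k - class_freq m r l).
Proof.
  unfold class_coef, class_freq.
  destruct (Nat.ltb_spec (k * m + r) K) as [Hk|]; [|easy].
  destruct (Nat.ltb_spec (l * m + r) K) as [Hl|]; [|easy]. intros _ _.
  assert (HK : 0 < INR K) by (apply lt_0_INR; lia).
  eapply Rle_trans; [|apply (Rabs_ln_sub_ge _ _ (INR K))];
    [|split; [apply lt_0_INR; lia | apply le_INR; lia]..].
  right. rewrite INR_ndist, !S_INR, !plus_INR, !mult_INR.
  replace (INR k * INR m + INR r + 1 - (INR l * INR m + INR r + 1))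
    with (INR m * (INR k - INR l)) by ring.
  rewrite Rabs_mult, (Rabs_right (INR m)) by apply Rle_ge, pos_INR. field. lra.
Qed.

(** * The mean value estimate *)

Lemma sum_Cmod_dpoly_sq_le K m a s t L : (0 < m)%nat -> NoDup L ->
  (forall chi, In chi L -> dirichlet_character m chi) ->
  lsum L (fun chi => Cmod (dpoly K a chi s t) ^ 2)
  <= INR m * sumR m (fun r => Cmod (class_poly a s K m r t) ^ 2).
Proof.
  intros Hm HL HD.
  set (G := fun r => Cconj (class_poly a s K m r t)).
  replace (sumR m _) with (vnorm2 m G)
    by (unfold vnorm2, G; apply sumR_ext; intros; now rewrite Cmod_conj).
  rewrite (lsum_ext L _ (fun chi => Cmod (cinner m G (fun r => chi (S r))) ^ 2)).
  - apply bessel_inequality; [apply pos_INR | |].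
    + apply NoDup_ForallOrdPairs; [exact HL|]. intros chi psi Hc Hp Hne.
      apply dirichlet_character_orth; auto.
    + intros chi Hc. split.
      * pose proof (vnorm2_dirichlet_character_pos m Hm chi (HD chi Hc)). lra.
      * exact (vnorm2_dirichlet_character_le m Hm chi (HD chi Hc)).
  - intros chi Hc. destruct (HD chi Hc) as [Hp _].
    rewrite (dpoly_classes K m a chi s t Hm Hp), <- Cmod_conj. unfold cinner, G.
    rewrite sumC_conj. f_equal. f_equal. apply sumC_ext; intros.
    rewrite Cmult_conj. ring.
Qed.

Lemma sum_RInt_Cmod_dpoly_sq_le K m a s T L : 0 <= T -> (0 < m)%nat -> NoDup L ->
  (forall chi, In chi L -> dirichlet_character m chi) ->
  lsum L (fun chi => RInt (fun t => Cmod (dpoly K a chi s t) ^ 2) (- T) T)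
  <= INR m * sumR m (fun r => RInt (fun t => Cmod (class_poly a s K m r t) ^ 2) (- T) T).
Proof.
  intros HT Hm HL HD.
  set (F := fun chi t => Cmod (dpoly K a chi s t) ^ 2).
  set (P := fun r t => Cmod (class_poly a s K m r t) ^ 2).
  change (lsum L (fun chi => RInt (F chi) (- T) T) <= INR m * sumR m (fun r => RInt (P r) (- T) T)).
  assert (HF : forall chi, is_RInt (F chi) (- T) T (RInt (F chi) (- T) T)).
  { intros. apply (RInt_correct (V := R_CompleteNormedModule)), ex_RInt_of_continuous.
    intros; apply continuous_sq, continuous_Cmod_dpoly. }
  assert (HP : forall r, is_RInt (P r) (- T) T (RInt (P r) (- T) T)).
  { intros. apply (RInt_correct (V := R_CompleteNormedModule)), ex_RInt_of_continuous.
    intros; apply continuous_sq, continuous_Cmod_tpoly. }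
  assert (HsumF := is_RInt_lsum L F _ (- T) T (fun chi _ => HF chi)).
  assert (HsumP : is_RInt (fun t => INR m * sumR m (fun r => P r t)) (- T) T
                          (INR m * sumR m (fun r => RInt (P r) (- T) T))).
  { apply (is_RInt_scal (V := R_NormedModule) (fun t => sumR m (fun r => P r t))).
    apply is_RInt_sumR. auto. }
  rewrite <- (is_RInt_unique _ _ _ _ HsumF), <- (is_RInt_unique _ _ _ _ HsumP).
  apply RInt_le; [lra | eexists; eauto | eexists; eauto |].
  intros t _. now apply sum_Cmod_dpoly_sq_le.
Qed.

Lemma floor_nat_spec x : 1 <= x -> (1 <= floor_nat x)%nat /\ INR (floor_nat x) <= x.
Proof.
  intros Hx. unfold floor_nat. destruct (base_Int_part x) as [H1 H2].
  assert (Hz : (0 < Int_part x)%Z) by (apply lt_IZR; lra).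
  rewrite INR_IZR_INZ, Z2Nat.id by lia. split; [lia | lra].
Qed.

Lemma sum_RInt_class_sq_le K m a s T : (0 < m)%nat -> (1 <= K)%nat ->
  INR m * sumR m (fun r => RInt (fun t => Cmod (class_poly a s K m r t) ^ 2) (- T) T)
  <= (2 * INR m * T + 4 * INR K * harmonic K) * weighted_energy K a s.
Proof.
  intros Hm HK.
  assert (HKpos : 0 < INR K) by (apply lt_0_INR; lia).
  assert (Hmpos : 0 < INR m) by (apply lt_0_INR; lia).
  rewrite <- (class_energy K m a s Hm), <- !sumR_scal.
  apply sumR_le. intros r _.
  replace ((2 * INR m * T + 4 * INR K * harmonic K) * vnorm2 K (class_coef a s K m r))
    with (INR m * ((2 * T + 4 * harmonic K / (INR m / INR K)) * vnorm2 K (class_coef a s K m r)))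
    by (field; lra).
  apply Rmult_le_compat_l; [lra|].
  apply RInt_Cmod_tpoly_sq_le; [apply Rdiv_lt_0_compat; lra|].
  intros k l _ _. apply class_freq_spacing.
Qed.

Lemma sum_char_integral_sq_le T N s a m L : 0 < T -> 1 <= N -> (0 < m)%nat -> NoDup L ->
  (forall chi, In chi L -> dirichlet_character m chi) ->
  lsum L (fun chi => char_integral T N s a chi ^ 2)
  <= 4 * T * (INR m * T + 2 * N * (1 + ln N)) * weighted_energy (floor_nat N) a s.
Proof.
  intros HT HN Hm HL HD. destruct (floor_nat_spec N HN) as [HK1 HKN].
  set (K := floor_nat N) in *. set (E := weighted_energy K a s).
  assert (Hcs : lsum L (fun chi => char_integral T N s a chi ^ 2)
                <= 2 * T * lsum L (fun chi => RInt (fun t => Cmod (dpoly K a chi s t) ^ 2) (- T) T)).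
  { rewrite <- lsum_scal. apply lsum_le. intros chi _.
    replace (2 * T) with (T - - T) by ring. apply RInt_sq_le; [lra|..];
      apply ex_RInt_of_continuous; intros; [|apply continuous_sq]; apply continuous_Cmod_dpoly. }
  pose proof (sum_RInt_Cmod_dpoly_sq_le K m a s T L ltac:(lra) Hm HL HD) as Hbessel.
  pose proof (sum_RInt_class_sq_le K m a s T Hm HK1) as Hclass. fold E in Hclass.
  assert (HKH : INR K * harmonic K <= N * (1 + ln N)).
  { apply Rmult_le_compat; [apply pos_INR | apply sumR_nonneg; auto using inv_INR_nonneg | lra |].
    eapply Rle_trans; [now apply harmonic_le_ln|]. apply Rplus_le_compat_l, ln_le; [|lra].
    apply lt_0_INR; lia. }
  assert (HE : 0 <= E) by apply weighted_energy_nonneg.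
  assert (INR K * harmonic K * E <= N * (1 + ln N) * E) by (apply Rmult_le_compat_r; lra).
  nra.
Qed.

Lemma sum_moduli_char_integral_sq_le Rr T N s j a L :
  0 < T -> 1 <= Rr -> 1 <= N -> (0 < j)%nat -> (forall q, NoDup (L q)) ->
  (forall q chi, In chi (L q) -> dirichlet_character (q * j) chi) ->
  rsum (floor_nat Rr) (fun q => lsum (L q) (fun chi => char_integral T N s a chi ^ 2))
  <= 8 * (1 + ln N) * (Rr * N * T + INR j * Rr ^ 2 * T ^ 2) * weighted_energy (floor_nat N) a s.
Proof.
  intros HT HR HN Hj HL HLc. destruct (floor_nat_spec Rr HR) as [_ HRf].
  set (E := weighted_energy (floor_nat N) a s). set (lnN := 1 + ln N).
  assert (HE : 0 <= E) by apply weighted_energy_nonneg.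
  assert (HjR : 1 <= INR j) by (apply (le_INR 1); lia).
  assert (HlnN : 1 <= lnN) by (unfold lnN; pose proof (ln_le 1 N); rewrite ln_1 in *; lra).
  set (B := 4 * T * (Rr * INR j * T + 2 * N * lnN) * E).
  assert (Hq : forall i, (i < floor_nat Rr)%nat ->
            lsum (L (S i)) (fun chi => char_integral T N s a chi ^ 2) <= B).
  { intros i Hi. eapply Rle_trans.
    - apply (sum_char_integral_sq_le T N s a (S i * j));
        [exact HT | exact HN | nia | apply HL | apply HLc].
    - assert (INR (S i) <= Rr)
        by (apply Rle_trans with (INR (floor_nat Rr)); [apply le_INR; lia | exact HRf]).
      apply Rmult_le_compat_r, Rmult_le_compat_l; [exact HE | lra |].
      rewrite mult_INR. unfold lnN. apply Rplus_le_compat_r, Rmult_le_compat_r, Rmult_le_compat_r; lra. }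
  assert (HB : 0 <= B).
  { apply Rmult_le_pos; [|exact HE]. apply Rmult_le_pos; [lra|].
    assert (0 <= Rr * INR j * T) by (repeat apply Rmult_le_pos; lra).
    assert (0 <= N * lnN) by (apply Rmult_le_pos; lra). lra. }
  rewrite rsum_sumR. eapply Rle_trans; [apply sumR_le; exact Hq|].
  rewrite (sumR_const _ B). apply Rle_trans with (Rr * B); [now apply Rmult_le_compat_r|].
  assert (0 <= INR j * Rr ^ 2 * T ^ 2 * E)
    by (repeat apply Rmult_le_pos; try apply pow2_ge_0; lra).
  assert (0 <= (lnN - 1) * (INR j * Rr ^ 2 * T ^ 2 * E)) by (apply Rmult_le_pos; lra).
  unfold B. lra.
Qed.

Lemma one_plus_ln_le_rpower x y eps : 0 < eps -> 1 <= x <= y ->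
  1 + ln x <= (1 + 1 / eps) * Rpower y eps.
Proof.
  intros He Hxy.
  assert (0 <= ln x) by (rewrite <- ln_1; apply ln_le; lra).
  assert (ln x <= ln y) by (apply ln_le; lra).
  assert (Hr : 1 + eps * ln y <= Rpower y eps) by apply exp_ineq1_le.
  assert (ln y <= Rpower y eps / eps).
  { apply (Rmult_le_reg_l eps); [lra|].
    replace (eps * (Rpower y eps / eps)) with (Rpower y eps) by (field; lra). nra. }
  replace ((1 + 1 / eps) * Rpower y eps) with (Rpower y eps + Rpower y eps / eps) by (field; lra).
  nra.
Qed.

Theorem mainTheorem11 :
  forall eps : R, 0 < eps ->
  exists K : R, 0 < K /\
  forall (Rr T N sigma : R) (j : nat) (a : nat -> C)
         (L : nat -> list (nat -> C)),
    3 <= T -> 1 <= Rr -> 1 <= N -> 1 / 2 <= sigma -> (0 < j)%nat ->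
    (* L q is a duplicate-free list of non-principal characters mod q j;
       taking all of them gives the sum over all non-principal characters *)
    (forall q, NoDup (L q)) ->
    (forall q chi, In chi (L q) -> nonprincipal_character (q * j) chi) ->
    rsum (floor_nat Rr)
      (fun q => fold_right Rplus 0
                  (map (fun chi => (char_integral T N sigma a chi) ^ 2) (L q)))
    <= K * Rpower (INR j * Rr * N * T) eps
         * (Rr * N * T + INR j * Rr ^ 2 * T ^ 2)
         * rsum (floor_nat N) (fun n => Cmod (a n) ^ 2 / Rpower (INR n) (2 * sigma)).
Proof.
  intros eps Heps. exists (8 * (1 + 1 / eps)).
  split; [assert (0 < 1 / eps) by (apply Rdiv_lt_0_compat; lra); lra|].
  (* The estimate holds for every real [sigma] and every [T > 0]. *)
  intros Rr T N sigma j a L HT HR HN _ Hj HL HLc.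
  eapply Rle_trans.
  { apply (sum_moduli_char_integral_sq_le Rr T N sigma j a L); auto; [lra|].
    intros q chi Hc. exact (proj1 (HLc q chi Hc)). }
  fold (weighted_energy (floor_nat N) a sigma).
  set (E := weighted_energy (floor_nat N) a sigma).
  set (P := Rr * N * T + INR j * Rr ^ 2 * T ^ 2).
  assert (Hlog : 1 + ln N <= (1 + 1 / eps) * Rpower (INR j * Rr * N * T) eps).
  { apply one_plus_ln_le_rpower; [lra|]. split; [lra|].
    assert (1 <= INR j) by (apply (le_INR 1); lia).
    replace N with (1 * 1 * N * 1) at 1 by ring. repeat apply Rmult_le_compat; lra. }
  assert (HPE : 0 <= P * E).
  { apply Rmult_le_pos; [|apply weighted_energy_nonneg]. unfold P.
    assert (0 <= INR j) by apply pos_INR.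
    apply Rplus_le_le_0_compat; repeat apply Rmult_le_pos; try apply pow2_ge_0; lra. }
  assert ((1 + ln N) * (P * E) <= (1 + 1 / eps) * Rpower (INR j * Rr * N * T) eps * (P * E))
    by (apply Rmult_le_compat_r; lra).
  lra.
Qed.
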